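(* Let $n\ge 1$, let $K,T\in\mathcal S_n\setminus\{\emptyset,\mathbb R^n\}$ and let $\lambda\in(0,1)$. Then $(1-\lambda)K+\lambda T\in\mathcal S_n$ and \[ \big((1-\lambda)K+\lambda T\big)^c=(1-\lambda)K^c+\lambda T^c, \] where $+$ denotes Minkowski addition.
   Context: $B(x,r)=\{y\in\mathbb R^n:\|y-x\|_2\le r\}$ is the closed Euclidean ball. For $A\subseteq\mathbb R^n$, its $c$-dual is $A^c=\{y:\|x-y\|_2\le 1\ \forall x\in A\}=\bigcap_{x\in A}B(x,1)$ (with $\emptyset^c=\mathbb R^n$). $\mathcal S_n$ (ball-bodies) is the class of all sets of the form $\bigcap_{x\in A}B(x,1)$ for some $A\subseteq\mathbb R^n$, i.e. the image of the map $A\mapsto A^c$; it contains $\emptyset$ and $\mathbb R^n$. *)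

From HB Require Import structures.
From mathcomp Require Import all_boot all_order all_algebra.
From mathcomp Require Import classical_sets reals.
Set Implicit Arguments. Unset Strict Implicit. Unset Printing Implicit Defensive.
Import Order.TTheory GRing.Theory Num.Theory.
Local Open Scope ring_scope.
Local Open Scope classical_set_scope.

Definition enorm {R : realType} {n : nat} (x : 'rV[R]_n) : R :=
  Num.sqrt (\sum_(i < n) (x 0 i) ^+ 2).

Definition cball {R : realType} {n : nat} (x : 'rV[R]_n) (r : R) : set 'rV[R]_n :=
  [set y | enorm (y - x) <= r].

(* c-dual: A^c = intersection over x in A of B(x,1); empty^c = R^n *)
Definition cdual {R : realType} {n : nat} (A : set 'rV[R]_n) : set 'rV[R]_n :=
  \bigcap_(x in A) cball x 1.

Definition ball_body {R : realType} {n : nat} (K : set 'rV[R]_n) : Prop :=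
  exists A : set 'rV[R]_n, K = cdual A.

Definition mink {R : realType} {n : nat} (a : R) (K : set 'rV[R]_n)
  (b : R) (T : set 'rV[R]_n) : set 'rV[R]_n :=
  [set a *: x + b *: y | x in K & y in T].

From HB Require Import structures.
From mathcomp Require Import all_boot all_order all_algebra.
From mathcomp Require Import classical_sets reals topology normedtype derive.
From mathcomp Require Import ring lra.
Set Implicit Arguments.
Unset Strict Implicit.
Unset Printing Implicit Defensive.
Import Order.TTheory GRing.Theory Num.Theory.
Import numFieldNormedType.Exports.
Local Open Scope ring_scope.
Local Open Scope classical_set_scope.

(* The inclusion of (1-l)K^c + lT^c in ((1-l)K + lT)^c is the convexity of the
   squared Euclidean norm.  Conversely, let y lie in the dual of M = (1-l)K + lT
   and, by compactness of K^c and T^c, let (p, w) in K^c x T^c make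
   (1-l)p + lw nearest to y.  If y is not that point, the unit vector u along
   y - (1-l)p - lw is an outer normal of K^c at p and of T^c at w.  A unit
   ball containing the ball-convex set K^c and touching it at p with normal u
   must be B(p - u, 1), since otherwise a spindle of K^c would stick out beyond
   p in direction u; hence p - u lies in K^cc = K, and likewise w - u in T.
   The point (1-l)(p - u) + l(w - u) of M is at distance > 1 from y, which is
   absurd.  Applying the identity to K^c and T^c shows that M is the dual of
   (1-l)K^c + lT^c, hence a ball-body. *)

Section BallBodies.
Variables (R : realType) (n : nat).
Implicit Types (x y z u w : 'rV[R]_n) (A K T : set 'rV[R]_n).

Definition dot x y : R := \sum_i x 0 i * y 0 i.

Lemma dotC x y : dot x y = dot y x.
Proof. by apply: eq_bigr => i _; rewrite mulrC. Qed.

Lemma dotDl x y z : dot (x + y) z = dot x z + dot y z.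
Proof. by rewrite /dot -big_split; apply: eq_bigr => i _; rewrite mxE mulrDl. Qed.

Lemma dotZl a x y : dot (a *: x) y = a * dot x y.
Proof. by rewrite /dot mulr_sumr; apply: eq_bigr => i _; rewrite mxE mulrA. Qed.

Lemma dotNl x y : dot (- x) y = - dot x y.
Proof. by rewrite -scaleN1r dotZl mulN1r. Qed.

Lemma dotDr x y z : dot x (y + z) = dot x y + dot x z.
Proof. by rewrite !(dotC x) dotDl. Qed.

Lemma dotZr a x y : dot x (a *: y) = a * dot x y.
Proof. by rewrite !(dotC x) dotZl. Qed.

Lemma dotNr x y : dot x (- y) = - dot x y.
Proof. by rewrite !(dotC x) dotNl. Qed.

Definition dotE := (dotDl, dotDr, dotNl, dotNr, dotZl, dotZr).

Lemma dot_ge0 x : 0 <= dot x x.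
Proof. by apply: sumr_ge0 => i _; rewrite -expr2 sqr_ge0. Qed.

Lemma dot_eq0 x : (dot x x == 0) = (x == 0).
Proof.
apply/idP/eqP => [|->]; last by rewrite /dot big1 // => i _; rewrite mxE mul0r.
rewrite psumr_eq0 => [/allP x0|i _]; last by rewrite -expr2 sqr_ge0.
by apply/rowP => j; rewrite mxE; have /x0 := mem_index_enum j; rewrite mulf_eq0 orbb => /eqP.
Qed.

Lemma dot_subC x y : dot (x - y) (x - y) = dot (y - x) (y - x).
Proof. by rewrite -(opprB y x) dotNl dotNr opprK. Qed.

Lemma cballP x y : cball x 1 y <-> dot (y - x) (y - x) <= 1.
Proof. by rewrite /cball /= -[X in _ <= X]sqrtr1 /enorm ler_sqrt. Qed.

Lemma cdualP A z : cdual A z <-> forall x, A x -> dot (z - x) (z - x) <= 1.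
Proof. by split=> zA x Ax; apply/cballP; exact: zA. Qed.

Lemma cdualS A K : A `<=` K -> cdual K `<=` cdual A.
Proof. by move=> AK z /cdualP zK; apply/cdualP => x /AK /zK. Qed.

Lemma sub_cdual2 A : A `<=` cdual (cdual A).
Proof. by move=> x Ax; apply/cdualP => z /cdualP/(_ x Ax); rewrite dot_subC. Qed.

Lemma cdualK K : ball_body K -> cdual (cdual K) = K.
Proof.
case=> A ->; apply/seteqP; split; last exact: sub_cdual2.
exact/cdualS/sub_cdual2.
Qed.

Lemma cdual_neq0 K : ball_body K -> K <> setT -> cdual K !=set0.
Proof.
move=> bK KT; apply/set0P/negP => /eqP K'0; apply: KT.
rewrite -(cdualK bK) K'0; apply/seteqP; split=> // z _; exact/cdualP.
Qed.

Lemma dot_convex_le1 x y t : dot x x <= 1 -> dot y y <= 1 -> 0 <= t <= 1 ->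
  dot ((1 - t) *: x + t *: y) ((1 - t) *: x + t *: y) <= 1.
Proof.
move=> x1 y1 /andP[t0 t1].
have := dot_ge0 (x - y); rewrite !dotE (dotC y x) => xy.
have : 0 <= t * (1 - t) by apply: mulr_ge0; lra.
nra.
Qed.

Lemma cdual_convex A x y t : cdual A x -> cdual A y -> 0 <= t <= 1 ->
  cdual A ((1 - t) *: x + t *: y).
Proof.
move=> /cdualP xA /cdualP yA t01; apply/cdualP => k Ak.
have -> : (1 - t) *: x + t *: y - k = (1 - t) *: (x - k) + t *: (y - k).
  by rewrite !scalerBr addrACA -opprD -scalerDl subrK scale1r.
by apply: dot_convex_le1; [exact: xA | exact: yA |].
Qed.

Lemma minkP a K b T z :
  mink a K b T z <-> exists x y, [/\ K x, T y & z = a *: x + b *: y].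
Proof.
split; first by case=> x Kx [y Ty <-]; exists x, y.
by case=> x [y [Kx Ty ->]]; exists x => //; exists y.
Qed.

Lemma mink_cdual_sub K T (l : R) : 0 <= l <= 1 ->
  mink (1 - l) (cdual K) l (cdual T) `<=` cdual (mink (1 - l) K l T).
Proof.
move=> l01 z /minkP[x [y [/cdualP xK /cdualP yT ->]]].
apply/cdualP => m /minkP[k [t [Kk Tt ->]]].
have -> : (1 - l) *: x + l *: y - ((1 - l) *: k + l *: t) =
    (1 - l) *: (x - k) + l *: (y - t).
  by rewrite !scalerBr opprD addrACA.
by apply: dot_convex_le1; [exact: xK | exact: yT |].
Qed.

Lemma spindle_push w u : dot u u = 1 -> dot u w <= 0 -> 1 < dot (w + u) (w + u) ->
  exists2 x, 0 < dot u x &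
    forall c, dot c c <= 1 -> dot (c + w) (c + w) <= 1 -> dot (c + x) (c + x) <= 1.
Proof.
move=> uu; rewrite !dotE uu (dotC w u).
set q := dot w w; set g := dot u w => g0 wu1.
pose m := (q - 2 * g) / 4.
have m0 : 0 <= m by rewrite /m; apply: divr_ge0; lra.
have qm0 : 0 < q + m ^+ 2 by have := sqr_ge0 m; lra.
pose nu := (q - 2 * m) / (q + m ^+ 2).
have nuE : nu * (q + m ^+ 2) = q - 2 * m by rewrite /nu; field; lra.
have nu0 : 0 < nu by rewrite /nu; apply: divr_gt0 => //; rewrite /m; lra.
have nu1 : nu <= 1.
  by rewrite /nu ler_pdivrMr // mul1r; have := sqr_ge0 m; lra.
(* For x = nu w + eta u, 1 - |c + x|^2 is
   (1 + eta - nu) (1 - |c|^2) + nu (1 - |c + w|^2) + eta |c - u|^2 minus the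
   left side of E0; taking eta = nu m with -g < m < q/2 makes <u, x> positive
   and E0 true for small nu. *)
pose eta := nu * m.
have eta0 : 0 <= eta by apply: mulr_ge0 => //; lra.
have E0 : 2 * eta + nu ^+ 2 * q + 2 * nu * eta * g + eta ^+ 2 - nu * q <= 0.
  have -> : 2 * eta + nu ^+ 2 * q + 2 * nu * eta * g + eta ^+ 2 - nu * q =
      nu * (nu * (q + m ^+ 2) - (q - 2 * m)) + 2 * nu * eta * g.
    by rewrite /eta; ring.
  rewrite nuE subrr mulr0 add0r.
  by have := mulr_ge0 (ltW nu0) eta0; nra.
exists (nu *: w + eta *: u).
  rewrite !dotE uu -/g.
  have : 0 < nu * (g + m) by apply: mulr_gt0 => //; rewrite /m; lra.
  by rewrite /eta; lra.
move=> c c1 cw1.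
have := dot_ge0 (c - u); move: cw1.
rewrite !dotE uu (dotC w c) (dotC u c) (dotC w u) -/q -/g.
move=> cw1 cu0.
have t1 : 0 <= (1 + eta - nu) * (1 - dot c c) by apply: mulr_ge0; lra.
have t2 : 0 <= nu * (1 - (dot c c + dot c w + (dot c w + q))) by apply: mulr_ge0; lra.
have t3 : 0 <= eta * (dot c c - dot c u - (dot c u - 1)) by apply: mulr_ge0; lra.
lra.
Qed.

Lemma cdual2_support A p u : cdual A p -> dot u u = 1 ->
  (forall z, cdual A z -> dot u z <= dot u p) -> cdual (cdual A) (p - u).
Proof.
move=> Ap uu pmax; apply/cdualP => s As; rewrite leNgt; apply/negP.
have -> : p - u - s = - ((s - p) + u) by rewrite opprD opprB addrAC.
rewrite dotNl dotNr opprK; set w := s - p => wu1.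
have wu : dot u w <= 0 by rewrite dotDr dotNr; have := pmax s As; lra.
have [x ux xA] := spindle_push uu wu wu1.
suff /pmax : cdual A (p + x) by rewrite dotDr; lra.
apply/cdualP => k Ak; rewrite addrAC; apply: xA; first by move/cdualP: Ap; apply.
by rewrite /w [p - k + _]addrC subrKA; move/cdualP: As; apply.
Qed.

Lemma le0_of_quadratic_bound (a b : R) : 0 <= b ->
  (forall t, 0 < t <= 1 -> 2 * t * a <= t ^+ 2 * b) -> a <= 0.
Proof.
move=> b0 ab; rewrite leNgt; apply/negP => a0.
pose t := a / (a + b).
have tab : t * (a + b) = a by rewrite /t; field; lra.
have t0 : 0 < t by rewrite /t; apply: divr_gt0; lra.
have t1 : t <= 1 by rewrite /t ler_pdivrMr; lra.
have := ab t; rewrite t0 t1 => /(_ isT); nra.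
Qed.

Lemma convex_min_normal (C : set 'rV[R]_n) r p a :
  (forall x z t, C x -> C z -> 0 <= t <= 1 -> C ((1 - t) *: x + t *: z)) ->
  0 < a -> C p ->
  (forall z, C z -> dot r r <= dot (r - a *: (z - p)) (r - a *: (z - p))) ->
  forall z, C z -> dot r (z - p) <= 0.
Proof.
move=> convC a0 Cp pmin z Cz; rewrite -(pmulr_rle0 _ a0).
apply: (@le0_of_quadratic_bound _ (a ^+ 2 * dot (z - p) (z - p))).
  by rewrite mulr_ge0 ?sqr_ge0 ?dot_ge0.
move=> t /andP[t0 t1].
have := pmin _ (convC p z t Cp Cz _); rewrite t1 ltW // => /(_ isT).
have -> : (1 - t) *: p + t *: z - p = t *: (z - p).
  by apply/rowP => i; rewrite !mxE; ring.
by rewrite scalerA !dotE (dotC z r) (dotC p r) (dotC p z); lra.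
Qed.

Lemma continuous_dot (T : topologicalType) (f g : T -> 'rV[R]_n) :
  continuous f -> continuous g -> continuous (fun t => dot (f t) (g t)).
Proof.
move=> cf cg; rewrite /dot; apply: (@continuous_big R^o _ _ _ _ add_continuous) => i _ t.
by apply: continuousM; [exact: (continuous_comp (cf t) (@coord_continuous R _ _ 0 i _))
                     | exact: (continuous_comp (cg t) (@coord_continuous R _ _ 0 i _))].
Qed.

Lemma closed_cdual A : closed (cdual A).
Proof.
apply: closed_bigI => x _.
have -> : cball x 1 = (fun z => dot (z - x) (z - x)) @^-1` [set r | r <= 1].
  by apply/seteqP; split=> z /cballP.
have cx : continuous (fun z : 'rV[R]_n => z - x).
  by move=> z; apply: continuousB; [move=> P | exact: cst_continuous].
have := proj1 (continuous_closedP _) (continuous_dot cx cx).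
by apply; exact: closed_le.
Qed.

Lemma coord_norm_le1 x j : dot x x <= 1 -> `|x 0 j| <= 1.
Proof.
move=> x1; have : x 0 j * x 0 j <= 1.
  apply: le_trans x1; rewrite /dot (bigD1 j) //= lerDl.
  by apply: sumr_ge0 => i _; rewrite -expr2 sqr_ge0.
by rewrite ler_norml => ?; apply/andP; split; nra.
Qed.

Lemma compact_cdual A x : A x -> compact (cdual A).
Proof.
move=> Ax; apply: bounded_closed_compact; last exact: closed_cdual.
apply: filterS (nbhs_pinfty_ge (num_real (`|x| + 1))) => M xM z /cdualP /(_ x Ax) zx.
apply: le_trans xM; rewrite -[z](subrK x) addrC (le_trans (ler_normD _ _)) // lerD2l.
rewrite [`|_|]mx_normrE; apply: bigmax_le => // ij _.
by rewrite (ord1 ij.1); exact: coord_norm_le1.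
Qed.

Lemma mink_nearest (P Q : set 'rV[R]_n) a b y :
  P !=set0 -> Q !=set0 -> compact P -> compact Q ->
  exists p q, [/\ P p, Q q & forall p' q', P p' -> Q q' ->
    dot (y - (a *: p + b *: q)) (y - (a *: p + b *: q)) <=
    dot (y - (a *: p' + b *: q')) (y - (a *: p' + b *: q'))].
Proof.
move=> [p0 Pp0] [q0 Qq0] cP cQ.
have cres : continuous (fun c : 'rV[R]_n * 'rV[R]_n => y - (a *: c.1 + b *: c.2)).
  move=> c; apply: (@continuousB _ _ _ (fun=> y) (fun c => a *: c.1 + b *: c.2)).
    exact: cst_continuous.
  by apply: continuousD; apply: continuousZl_tmp; [exact: cvg_fst | exact: cvg_snd].
have [[p q]] := compact_EVT_min (ex_intro _ (p0, q0) (conj Pp0 Qq0))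
  (compact_setX cP cQ) (continuous_subspaceT (continuous_dot cres cres)).
rewrite inE => -[/= Pp Qq] pq_min; exists p, q; split=> // p' q' Pp' Qq'.
by apply: (pq_min (p', q')); rewrite inE.
Qed.

Lemma cdual_mink_sub K T (l : R) : ball_body K -> ball_body T ->
  K !=set0 -> T !=set0 -> cdual K !=set0 -> cdual T !=set0 -> 0 < l < 1 ->
  cdual (mink (1 - l) K l T) `<=` mink (1 - l) (cdual K) l (cdual T).
Proof.
move=> bK bT [k Kk] [t Tt] K'0 T'0 /andP[l0 l1] y yM.
have [p [w [Kp Tw]]] := mink_nearest (1 - l) l y K'0 T'0 (compact_cdual Kk) (compact_cdual Tt).
move Er : (y - _) => r pw_min.
have [r0|r0] := eqVneq r 0.
  by apply/minkP; exists p, w; split=> //; apply/eqP; rewrite -subr_eq0 Er r0.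
exfalso.
have rr0 : 0 < dot r r by rewrite lt_def dot_eq0 r0 dot_ge0.
have s0 : 0 < Num.sqrt (dot r r) by rewrite sqrtr_gt0.
pose u := (Num.sqrt (dot r r))^-1 *: r.
have uu : dot u u = 1.
  by rewrite /u !dotE mulrA -invfM -expr2 sqr_sqrtr ?dot_ge0 // mulVf // gt_eqF.
have ru : 0 <= dot r u by rewrite /u dotZr mulr_ge0 ?dot_ge0 // invr_ge0 ltW.
have u_normal (C : set 'rV[R]_n) c : (forall z, C z -> dot r (z - c) <= 0) ->
    forall z, C z -> dot u z <= dot u c.
  move=> rC z Cz; rewrite -subr_le0 -dotNr -dotDr /u dotZl pmulr_rle0 ?invr_gt0 //.
  exact: rC.
clearbody u.
have Kpu : K (p - u).
  rewrite -(cdualK bK); apply: (cdual2_support Kp uu); apply: u_normal.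
  apply: (convex_min_normal (a := 1 - l) (@cdual_convex K) _ Kp) => [|z Kz]; first lra.
  have -> : r - (1 - l) *: (z - p) = y - ((1 - l) *: z + l *: w).
    by rewrite -Er; apply/rowP => i; rewrite !mxE; ring.
  exact: pw_min.
have Twu : T (w - u).
  rewrite -(cdualK bT); apply: (cdual2_support Tw uu); apply: u_normal.
  apply: (convex_min_normal (a := l) (@cdual_convex T) l0 Tw) => z Tz.
  have -> : r - l *: (z - w) = y - ((1 - l) *: p + l *: z).
    by rewrite -Er; apply/rowP => i; rewrite !mxE; ring.
  exact: pw_min.
have : mink (1 - l) K l T ((1 - l) *: (p - u) + l *: (w - u)).
  by apply/minkP; exists (p - u), (w - u).
move/(proj1 (cdualP _ _) yM).
have -> : y - ((1 - l) *: (p - u) + l *: (w - u)) = r + u.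
  by rewrite -Er; apply/rowP => i; rewrite !mxE; ring.
by rewrite !dotE uu (dotC u r); lra.
Qed.

Lemma cdual_mink K T (l : R) : ball_body K -> ball_body T ->
  K !=set0 -> T !=set0 -> cdual K !=set0 -> cdual T !=set0 -> 0 < l < 1 ->
  cdual (mink (1 - l) K l T) = mink (1 - l) (cdual K) l (cdual T).
Proof.
move=> bK bT K0 T0 K'0 T'0 l01; apply/seteqP; split; first exact: cdual_mink_sub.
by apply: mink_cdual_sub; case/andP: l01 => l0 l1; rewrite !ltW.
Qed.

End BallBodies.

Theorem theorem1p19 (R : realType) (n : nat) (K T : set 'rV[R]_n) (l : R) :
  (1 <= n)%N ->
  ball_body K -> K <> set0 -> K <> setT ->
  ball_body T -> T <> set0 -> T <> setT ->
  0 < l < 1 ->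
  ball_body (mink (1 - l) K l T) /\
  cdual (mink (1 - l) K l T) = mink (1 - l) (cdual K) l (cdual T).
Proof.
move=> _ bK /eqP/set0P K0 KT bT /eqP/set0P T0 TT l01.
have K'0 := cdual_neq0 bK KT; have T'0 := cdual_neq0 bT TT.
split; last exact: cdual_mink.
exists (mink (1 - l) (cdual K) l (cdual T)).
rewrite cdual_mink ?(cdualK bK) ?(cdualK bT) //; by [exists K | exists T].
Qed.
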